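(* Let $V=\{0,\tfrac12,1\}$ and consider languages with a constant expressive semantics whose consequence relation is induced by one of the five intersective mixed consequence truth-relations $ss=\models_{\{1\},\{1\}}$, $tt=\models_{\{1,\frac12\},\{1,\frac12\}}$, $st=\models_{\{1\},\{1,\frac12\}}$, $ts=\models_{\{1,\frac12\},\{1\}}$, and $ss\cap tt$. Each of these five relations admits a G-disjunction and a G-conjunction. Each of $ss$, $tt$, $st$, $ts$ admits a G-negation and a G-conditional, whereas $ss\cap tt$ admits neither a G-negation nor a G-conditional.
   Context: $\models_{\mathcal{D}_p,\mathcal{D}_c}$ holds between $\gamma,\delta\subseteq V$ iff ($\gamma\subseteq\mathcal{D}_p\Rightarrow\delta\cap\mathcal{D}_c\neq\emptyset$). A semantics: set of valuations mapping atoms to $V$, interpreting each connective by a fixed truth function, extended compositionally, with every assignment of values to finitely many distinct atoms realized; constant expressive: every $\alpha\in V$ is the constant value of some formula. Induced consequence: $\Gamma\vdash\Delta$ iff $v(\Gamma)\models v(\Delta)$ for all valuations $v$; write $\Gamma,A$ for $\Gamma\cup\{A\}$. A relation admits a G-connective if some truth function, assigned to a connective, makes it satisfy, for all sets $\Gamma,\Delta$ and formulas $A,B$: G-conjunction: $\Gamma,A\wedge B\vdash\Delta$ iff $\Gamma,A,B\vdash\Delta$; $\Gamma\vdash A\wedge B,\Delta$ iff ($\Gamma\vdash A,\Delta$ and $\Gamma\vdash B,\Delta$). G-disjunction: $\Gamma\vdash A\vee B,\Delta$ iff $\Gamma\vdash A,B,\Delta$; $\Gamma,A\vee B\vdash\Delta$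 iff ($\Gamma,A\vdash\Delta$ and $\Gamma,B\vdash\Delta$). G-negation: $\Gamma,\neg A\vdash\Delta$ iff $\Gamma\vdash A,\Delta$; $\Gamma\vdash\neg A,\Delta$ iff $\Gamma,A\vdash\Delta$. G-conditional: $\Gamma\vdash A\to B,\Delta$ iff $\Gamma,A\vdash B,\Delta$; $\Gamma,A\to B\vdash\Delta$ iff ($\Gamma\vdash A,\Delta$ and $\Gamma,B\vdash\Delta$). *)

From mathcomp Require Import all_boot.
Set Implicit Arguments. Unset Strict Implicit. Unset Printing Implicit Defensive.

(* Truth values V = {0, 1/2, 1}. *)
Inductive V : Type := V0 | Vh | V1.

Inductive form (C : Type) (ar : C -> nat) : Type :=
| Atom : nat -> form ar
| Op : forall c : C, ('I_(ar c) -> form ar) -> form ar.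
Arguments Atom {C ar} _.
Arguments Op {C ar} c _.

Fixpoint eval (C : Type) (ar : C -> nat) (I : forall c, ('I_(ar c) -> V) -> V)
  (s : nat -> V) (A : form ar) : V :=
  match A with
  | Atom n => s n
  | Op c args => I c (fun i => eval I s (args i))
  end.

Definition rich (S : (nat -> V) -> Prop) : Prop :=
  forall (n : nat) (a : 'I_n -> nat) (x : 'I_n -> V),
    injective a -> exists s, S s /\ forall i, s (a i) = x i.

Definition const_expressive (C : Type) (ar : C -> nat)
  (I : forall c, ('I_(ar c) -> V) -> V) (S : (nat -> V) -> Prop) : Prop :=
  forall alpha : V, exists phi : form ar, forall s, S s -> eval I s phi = alpha.

Definition truth_rel := (V -> Prop) -> (V -> Prop) -> Prop.

Definition mixed (Dp Dc : V -> Prop) : truth_rel :=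
  fun g d => (forall x, g x -> Dp x) -> exists x, d x /\ Dc x.

Definition D1 (x : V) : Prop := x = V1.
Definition D1h (x : V) : Prop := x = V1 \/ x = Vh.

Definition ss : truth_rel := mixed D1 D1.
Definition tt : truth_rel := mixed D1h D1h.
Definition st : truth_rel := mixed D1 D1h.
Definition ts : truth_rel := mixed D1h D1.
Definition ss_cap_tt : truth_rel := fun g d => ss g d /\ tt g d.

Definition conseq (C : Type) (ar : C -> nat) (I : forall c, ('I_(ar c) -> V) -> V)
  (S : (nat -> V) -> Prop) (R : truth_rel)
  (G D : form ar -> Prop) : Prop :=
  forall s, S s ->
    R (fun x => exists A, G A /\ eval I s A = x)
      (fun x => exists A, D A /\ eval I s A = x).

Definition addf (C : Type) (G : C -> Prop) (A : C) : C -> Prop :=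
  fun B => G B \/ B = A.

(* Extending a language by one fresh connective (None) of arity k. *)
Definition ext_ar (C : Type) (ar : C -> nat) (k : nat) (o : option C) : nat :=
  match o with Some c => ar c | None => k end.

Definition ext_int (C : Type) (ar : C -> nat) (I : forall c, ('I_(ar c) -> V) -> V)
  (k : nat) (f : ('I_k -> V) -> V) : forall o, ('I_(ext_ar ar k o) -> V) -> V :=
  fun o => match o with Some c => I c | None => f end.

Definition un (T : Type) (A : T) : 'I_1 -> T := fun _ => A.
Definition bin (T : Type) (A B : T) : 'I_2 -> T :=
  fun i => if val i == 0 then A else B.

Section G.
Variables (C : Type) (ar : C -> nat) (I : forall c, ('I_(ar c) -> V) -> V)
  (S : (nat -> V) -> Prop) (R : truth_rel).

Definition admits_G_conj : Prop :=
  exists f : ('I_2 -> V) -> V,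
    let L := form (ext_ar ar 2) in
    let cs := conseq (ext_int I f) S R in
    let cj (A B : L) : L := Op None (bin A B) in
    forall (G D : L -> Prop) (A B : L),
      (cs (addf G (cj A B)) D <-> cs (addf (addf G A) B) D) /\
      (cs G (addf D (cj A B)) <-> cs G (addf D A) /\ cs G (addf D B)).

Definition admits_G_disj : Prop :=
  exists f : ('I_2 -> V) -> V,
    let L := form (ext_ar ar 2) in
    let cs := conseq (ext_int I f) S R in
    let dj (A B : L) : L := Op None (bin A B) in
    forall (G D : L -> Prop) (A B : L),
      (cs G (addf D (dj A B)) <-> cs G (addf (addf D A) B)) /\
      (cs (addf G (dj A B)) D <-> cs (addf G A) D /\ cs (addf G B) D).

Definition admits_G_neg : Prop :=
  exists f : ('I_1 -> V) -> V,
    let L := form (ext_ar ar 1) in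
    let cs := conseq (ext_int I f) S R in
    let ng (A : L) : L := Op None (un A) in
    forall (G D : L -> Prop) (A : L),
      (cs (addf G (ng A)) D <-> cs G (addf D A)) /\
      (cs G (addf D (ng A)) <-> cs (addf G A) D).

Definition admits_G_cond : Prop :=
  exists f : ('I_2 -> V) -> V,
    let L := form (ext_ar ar 2) in
    let cs := conseq (ext_int I f) S R in
    let im (A B : L) : L := Op None (bin A B) in
    forall (G D : L -> Prop) (A B : L),
      (cs G (addf D (im A B)) <-> cs (addf G A) (addf D B)) /\
      (cs (addf G (im A B)) D <-> cs G (addf D A) /\ cs (addf G B) D).
End G.

(* Extending a set of premises or conclusions by one value [a] acts on a
   mixed relation |=_{Dp,Dc} very simply: |=(g + a, d) iff (Dp a -> |=(g, d)),
   and |=(g, d + a) iff (Dc a \/ |=(g, d)).  Each G-rule for a connective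
   with truth function f therefore reduces to conditions on f relative to
   Dp and Dc: min and max work as conjunction and disjunction whenever Dp
   and Dc are upward closed (and these survive intersecting relations), a
   negation n must satisfy Dp (n a) <-> ~ Dc a and Dc (n a) <-> ~ Dp a, and
   then max (n a) b is a G-conditional.
   Conversely, by constant expressiveness every set of values is the value
   set of a set of formulas, so a G-connective gives a truth function obeying
   its rule on arbitrary sets of values.  For ss /\ tt the rules instantiated
   at the value 1/2 are contradictory: 1/2 is tt- but not ss-designated. *)

From mathcomp Require Import all_boot.
From Stdlib Require Import Classical FunctionalExtensionality PropExtensionality.
Set Implicit Arguments. Unset Strict Implicit. Unset Printing Implicit Defensive.

Section Rules.
Variable R : truth_rel.

Definition G_conj_rule (m : V -> V -> V) : Prop :=
  forall g d a b,
    (R (addf g (m a b)) d <-> R (addf (addf g a) b) d) /\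
    (R g (addf d (m a b)) <-> R g (addf d a) /\ R g (addf d b)).

Definition G_disj_rule (j : V -> V -> V) : Prop :=
  forall g d a b,
    (R g (addf d (j a b)) <-> R g (addf (addf d a) b)) /\
    (R (addf g (j a b)) d <-> R (addf g a) d /\ R (addf g b) d).

Definition G_neg_rule (n : V -> V) : Prop :=
  forall g d a,
    (R (addf g (n a)) d <-> R g (addf d a)) /\
    (R g (addf d (n a)) <-> R (addf g a) d).

Definition G_cond_rule (h : V -> V -> V) : Prop :=
  forall g d a b,
    (R g (addf d (h a b)) <-> R (addf g a) (addf d b)) /\
    (R (addf g (h a b)) d <-> R g (addf d a) /\ R (addf g b) d).

End Rules.

Lemma G_conj_rule_cap (R1 R2 : truth_rel) m :
  G_conj_rule R1 m -> G_conj_rule R2 m ->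
  G_conj_rule (fun g d => R1 g d /\ R2 g d) m.
Proof.
move=> H1 H2 g d a b.
have [? ?] := H1 g d a b; have [? ?] := H2 g d a b; tauto.
Qed.

Lemma G_disj_rule_cap (R1 R2 : truth_rel) j :
  G_disj_rule R1 j -> G_disj_rule R2 j ->
  G_disj_rule (fun g d => R1 g d /\ R2 g d) j.
Proof.
move=> H1 H2 g d a b.
have [? ?] := H1 g d a b; have [? ?] := H2 g d a b; tauto.
Qed.

Definition meet_for (D : V -> Prop) (m : V -> V -> V) : Prop :=
  forall a b, D (m a b) <-> D a /\ D b.
Definition join_for (D : V -> Prop) (j : V -> V -> V) : Prop :=
  forall a b, D (j a b) <-> D a \/ D b.
Definition neg_for (D D' : V -> Prop) (n : V -> V) : Prop :=
  forall a, D (n a) <-> ~ D' a.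

Definition vset0 : V -> Prop := fun _ => False.

Section Mixed.
Variables Dp Dc : V -> Prop.

Lemma mixed_addf_l g d a :
  mixed Dp Dc (addf g a) d <-> (Dp a -> mixed Dp Dc g d).
Proof.
split=> [H Dpa Dpg | H Dpga]; first by apply: H => x [/Dpg | ->].
by apply: H => [|x gx]; apply: Dpga; [right | left].
Qed.

Lemma mixed_addf_r g d a :
  mixed Dp Dc g (addf d a) <-> Dc a \/ mixed Dp Dc g d.
Proof.
split=> [H | [Dca _ | H Dpg]].
- have [|nDca] := classic (Dc a); [by left | right] => Dpg.
  by have [x [[dx | ->] Dcx]] := H Dpg; [exists x | ].
- by exists a; split; [right |].
- by have [x [dx Dcx]] := H Dpg; exists x; split; [left |].
Qed.

Lemma mixed_vset0 : mixed Dp Dc vset0 vset0 <-> False.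
Proof. by split=> // /(_ (fun _ => False_ind _)) [? []]. Qed.

Lemma mixed_G_conj_rule m :
  meet_for Dp m -> meet_for Dc m -> G_conj_rule (mixed Dp Dc) m.
Proof. by move=> Hp Hc g d a b; rewrite !mixed_addf_l !mixed_addf_r Hp Hc; tauto. Qed.

Lemma mixed_G_disj_rule j :
  join_for Dp j -> join_for Dc j -> G_disj_rule (mixed Dp Dc) j.
Proof. by move=> Hp Hc g d a b; rewrite !mixed_addf_l !mixed_addf_r Hp Hc; tauto. Qed.

Lemma mixed_G_neg_rule n :
  neg_for Dp Dc n -> neg_for Dc Dp n -> G_neg_rule (mixed Dp Dc) n.
Proof.
move=> Hp Hc g d a; rewrite !mixed_addf_l !mixed_addf_r Hp Hc.
by have := classic (Dp a); have := classic (Dc a); tauto.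
Qed.

Lemma mixed_G_cond_rule n j :
  neg_for Dp Dc n -> neg_for Dc Dp n -> join_for Dp j -> join_for Dc j ->
  G_cond_rule (mixed Dp Dc) (fun a b => j (n a) b).
Proof.
move=> Hnp Hnc Hjp Hjc g d a b.
rewrite !mixed_addf_l !mixed_addf_r Hjp Hjc Hnp Hnc.
by have := classic (Dp a); have := classic (Dc a); tauto.
Qed.
End Mixed.

Definition vmax (a b : V) : V :=
  match a, b with
  | V1, _ | _, V1 => V1
  | Vh, _ | _, Vh => Vh
  | V0, V0 => V0
  end.

Definition vmin (a b : V) : V :=
  match a, b with
  | V0, _ | _, V0 => V0
  | Vh, _ | _, Vh => Vh
  | V1, V1 => V1
  end.

Definition upward (D : V -> Prop) : Prop := (D V0 -> D Vh) /\ (D Vh -> D V1).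

Lemma upward_join_vmax D : upward D -> join_for D vmax.
Proof. by case=> ? ?; do 2 case=> /=; tauto. Qed.

Lemma upward_meet_vmin D : upward D -> meet_for D vmin.
Proof. by case=> ? ?; do 2 case=> /=; tauto. Qed.

Lemma upward_D1 : upward D1.
Proof. by split. Qed.

Lemma upward_D1h : upward D1h.
Proof. by split=> _; [right | left]. Qed.

Definition neg_ss (a : V) : V := if a is V1 then V0 else V1.
Definition neg_tt (a : V) : V := if a is V0 then V1 else V0.
Definition neg_k (a : V) : V :=
  match a with V0 => V1 | Vh => Vh | V1 => V0 end.

Lemma D1E a : D1 a <-> if a is V1 then True else False.
Proof. by case: a. Qed.

Lemma D1hE a : D1h a <-> if a is V0 then False else True.
Proof. by rewrite /D1h; case: a; intuition discriminate. Qed.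

Lemma neg_for_ss : neg_for D1 D1 neg_ss.
Proof. by case; rewrite !D1E /=; tauto. Qed.

Lemma neg_for_tt : neg_for D1h D1h neg_tt.
Proof. by case; rewrite !D1hE /=; tauto. Qed.

Lemma neg_for_st : neg_for D1 D1h neg_k.
Proof. by case; rewrite D1E D1hE /=; tauto. Qed.

Lemma neg_for_ts : neg_for D1h D1 neg_k.
Proof. by case; rewrite D1E D1hE /=; tauto. Qed.

Lemma ss_cap_tt_no_G_neg_rule n : ~ G_neg_rule ss_cap_tt n.
Proof.
(* {1/2} |= 1/2 forces n(1/2) = 0 via {1/2, n(1/2)} |= {}; then {0} |= {}
   would yield {} |= 1/2, which ss refutes. *)
move=> Hn.
have [+ _] := Hn (addf vset0 Vh) vset0 Vh.
have [+ _] := Hn vset0 vset0 Vh.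
rewrite /ss_cap_tt /ss /tt !mixed_addf_l !mixed_addf_r !mixed_vset0 !D1E !D1hE.
by case: (n Vh) => /=; tauto.
Qed.

Lemma ss_cap_tt_no_G_cond_rule h : ~ G_cond_rule ss_cap_tt h.
Proof.
(* If h(1/2, 0) = 0 the left rule yields {} |= 1/2; otherwise the right rule
   turns the valid {1/2} |= h(1/2, 0) into the tt-invalid {1/2} |= 0. *)
move=> Hh.
have [+ _] := Hh (addf vset0 Vh) vset0 Vh V0.
have [_ +] := Hh vset0 vset0 Vh V0.
rewrite /ss_cap_tt /ss /tt !mixed_addf_l !mixed_addf_r !mixed_vset0 !D1E !D1hE.
by case: (h Vh V0) => /=; tauto.
Qed.

Section Consequence.
Variables (C : Type) (ar : C -> nat) (J : forall c, ('I_(ar c) -> V) -> V)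
  (S : (nat -> V) -> Prop).

Definition vals (s : nat -> V) (G : form ar -> Prop) : V -> Prop :=
  fun x => exists A, G A /\ eval J s A = x.

Lemma vals_addf s G A : vals s (addf G A) = addf (vals s G) (eval J s A).
Proof.
apply: functional_extensionality => x; apply: propositional_extensionality.
split=> [[B [[GB | ->] <-]] | [[B [GB <-]] | ->]].
- by left; exists B.
- by right.
- by exists B; split; first left.
- by exists A; split; first right.
Qed.

Lemma conseq_iff R G D G' D' :
  (forall s, R (vals s G) (vals s D) <-> R (vals s G') (vals s D')) ->
  conseq J S R G D <-> conseq J S R G' D'.
Proof. by move=> E; split=> H s /H /E. Qed.

Lemma conseq_iff_and R G D G' D' G'' D'' :
  (forall s, R (vals s G) (vals s D) <->
             R (vals s G') (vals s D') /\ R (vals s G'') (vals s D'')) ->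
  conseq J S R G D <-> conseq J S R G' D' /\ conseq J S R G'' D''.
Proof.
move=> E; split=> [H | [H1 H2] s Ss]; last by apply/E; split; [apply: H1 | apply: H2].
by split=> s /H /E [].
Qed.

Definition represents (G : form ar -> Prop) (g : V -> Prop) : Prop :=
  forall s, S s -> vals s G = g.

Lemma represents_addf G g A a :
  represents G g -> (forall s, S s -> eval J s A = a) ->
  represents (addf G A) (addf g a).
Proof. by move=> HG HA s Ss; rewrite vals_addf HG // HA. Qed.

Definition valued_in (g : V -> Prop) : form ar -> Prop :=
  fun A => forall s, S s -> g (eval J s A).

Lemma represents_valued_in g :
  const_expressive J S -> represents (valued_in g) g.
Proof.
move=> ce s Ss; apply: functional_extensionality => x.
apply: propositional_extensionality; split=> [[A [gA <-]] | gx]; first exact: gA.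
by have [A HA] := ce x; exists A; split=> [s' Ss' |]; rewrite HA.
Qed.

Lemma conseq_represents R G D g d :
  (exists s, S s) -> represents G g -> represents D d ->
  conseq J S R G D <-> R g d.
Proof.
move=> [s0 Ss0] HG HD.
have E s : S s -> R (vals s G) (vals s D) = R g d by move=> Ss; rewrite HG // HD.
split=> [H | H s Ss]; first by rewrite -(E s0 Ss0); apply: H.
by change (R (vals s G) (vals s D)); rewrite E.
Qed.
End Consequence.

Section Admits.
Variables (C : Type) (ar : C -> nat) (I : forall c, ('I_(ar c) -> V) -> V)
  (S : (nat -> V) -> Prop).

Lemma admits_G_conj_of_rule R m : G_conj_rule R m -> admits_G_conj I S R.
Proof.
move=> Hm; exists (fun x => m (x ord0) (x ord_max)) => G D A B.
split; [apply: conseq_iff | apply: conseq_iff_and] => s; rewrite !vals_addf.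
- exact: (Hm _ _ _ _).1.
- exact: (Hm _ _ _ _).2.
Qed.

Lemma admits_G_disj_of_rule R j : G_disj_rule R j -> admits_G_disj I S R.
Proof.
move=> Hj; exists (fun x => j (x ord0) (x ord_max)) => G D A B.
split; [apply: conseq_iff | apply: conseq_iff_and] => s; rewrite !vals_addf.
- exact: (Hj _ _ _ _).1.
- exact: (Hj _ _ _ _).2.
Qed.

Lemma admits_G_neg_of_rule R n : G_neg_rule R n -> admits_G_neg I S R.
Proof.
move=> Hn; exists (fun x => n (x ord0)) => G D A.
split; apply: conseq_iff => s; rewrite !vals_addf.
- exact: (Hn _ _ _).1.
- exact: (Hn _ _ _).2.
Qed.

Lemma admits_G_cond_of_rule R h : G_cond_rule R h -> admits_G_cond I S R.
Proof.
move=> Hh; exists (fun x => h (x ord0) (x ord_max)) => G D A B.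
split; [apply: conseq_iff | apply: conseq_iff_and] => s; rewrite !vals_addf.
- exact: (Hh _ _ _ _).1.
- exact: (Hh _ _ _ _).2.
Qed.

Fixpoint embed_form k (A : form ar) : form (ext_ar ar k) :=
  match A with
  | Atom n => Atom n
  | Op c args => @Op _ (ext_ar ar k) (Some c) (fun i => embed_form k (args i))
  end.

Lemma eval_embed_form k (f : ('I_k -> V) -> V) s A :
  eval (ext_int I f) s (embed_form k A) = eval I s A.
Proof.
elim: A => [// | c args IH] /=.
by rewrite (functional_extensionality _ _ IH).
Qed.

Lemma const_expressive_ext k (f : ('I_k -> V) -> V) :
  const_expressive I S -> const_expressive (ext_int I f) S.
Proof.
move=> ce alpha; have [A HA] := ce alpha.
by exists (embed_form k A) => s Ss; rewrite eval_embed_form HA.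
Qed.

Lemma G_neg_rule_of_admits R :
  (exists s, S s) -> const_expressive I S -> admits_G_neg I S R ->
  exists n, G_neg_rule R n.
Proof.
move=> S_ne ce [f Hf]; exists (fun a => f (un a)) => g d a.
have ceJ := const_expressive_ext f ce.
have [A HA] := ceJ a.
have HnA s : S s -> eval (ext_int I f) s (Op None (un A)) = f (un a).
  by move=> Ss /=; rewrite /un HA.
have Hg := represents_valued_in g ceJ.
have Hd := represents_valued_in d ceJ.
have [] := Hf (valued_in (ext_int I f) S g) (valued_in (ext_int I f) S d) A.
by rewrite (conseq_represents R S_ne (represents_addf Hg HnA) Hd)
  (conseq_represents R S_ne Hg (represents_addf Hd HA))
  (conseq_represents R S_ne Hg (represents_addf Hd HnA))
  (conseq_represents R S_ne (represents_addf Hg HA) Hd).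
Qed.

Lemma G_cond_rule_of_admits R :
  (exists s, S s) -> const_expressive I S -> admits_G_cond I S R ->
  exists h, G_cond_rule R h.
Proof.
move=> S_ne ce [f Hf]; exists (fun a b => f (bin a b)) => g d a b.
have ceJ := const_expressive_ext f ce.
have [A HA] := ceJ a; have [B HB] := ceJ b.
have HhAB s : S s -> eval (ext_int I f) s (Op None (bin A B)) = f (bin a b).
  move=> Ss /=; congr f; apply: functional_extensionality => i.
  by rewrite /bin; case: ifP => _; [apply: HA | apply: HB].
have Hg := represents_valued_in g ceJ.
have Hd := represents_valued_in d ceJ.
have [] := Hf (valued_in (ext_int I f) S g) (valued_in (ext_int I f) S d) A B.
by rewrite (conseq_represents R S_ne Hg (represents_addf Hd HhAB))
  (conseq_represents R S_ne (represents_addf Hg HA) (represents_addf Hd HB))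
  (conseq_represents R S_ne (represents_addf Hg HhAB) Hd)
  (conseq_represents R S_ne Hg (represents_addf Hd HA))
  (conseq_represents R S_ne (represents_addf Hg HB) Hd).
Qed.

Lemma mixed_admits_G_disj_conj Dp Dc :
  upward Dp -> upward Dc ->
  admits_G_disj I S (mixed Dp Dc) /\ admits_G_conj I S (mixed Dp Dc).
Proof.
move=> upDp upDc; split.
  by apply/admits_G_disj_of_rule/mixed_G_disj_rule; apply: upward_join_vmax.
by apply/admits_G_conj_of_rule/mixed_G_conj_rule; apply: upward_meet_vmin.
Qed.

Lemma ss_cap_tt_admits_G_disj_conj :
  admits_G_disj I S ss_cap_tt /\ admits_G_conj I S ss_cap_tt.
Proof.
have [jD1 jD1h] := (upward_join_vmax upward_D1, upward_join_vmax upward_D1h).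
have [mD1 mD1h] := (upward_meet_vmin upward_D1, upward_meet_vmin upward_D1h).
split.
  apply/(admits_G_disj_of_rule (j := vmax))/G_disj_rule_cap;
    exact: mixed_G_disj_rule.
apply/(admits_G_conj_of_rule (m := vmin))/G_conj_rule_cap;
  exact: mixed_G_conj_rule.
Qed.

Lemma mixed_admits_G_neg_cond Dp Dc n :
  upward Dp -> upward Dc -> neg_for Dp Dc n -> neg_for Dc Dp n ->
  admits_G_neg I S (mixed Dp Dc) /\ admits_G_cond I S (mixed Dp Dc).
Proof.
move=> upDp upDc nDp nDc; split; first exact/admits_G_neg_of_rule/mixed_G_neg_rule.
by apply/admits_G_cond_of_rule/mixed_G_cond_rule => //; apply: upward_join_vmax.
Qed.

Lemma rich_inhabited : rich S -> exists s, S s.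
Proof. by move=> /(_ 0 (fun => 0) (fun => V0)) [[] | s [Ss _]]; last exists s. Qed.

Lemma ss_cap_tt_not_admits_G_neg :
  rich S -> const_expressive I S -> ~ admits_G_neg I S ss_cap_tt.
Proof.
move=> /rich_inhabited S_ne ce /(G_neg_rule_of_admits S_ne ce) [n].
exact: ss_cap_tt_no_G_neg_rule.
Qed.

Lemma ss_cap_tt_not_admits_G_cond :
  rich S -> const_expressive I S -> ~ admits_G_cond I S ss_cap_tt.
Proof.
move=> /rich_inhabited S_ne ce /(G_cond_rule_of_admits S_ne ce) [h].
exact: ss_cap_tt_no_G_cond_rule.
Qed.
End Admits.

Theorem theorem4p1 (C : Type) (ar : C -> nat)
  (I : forall c, ('I_(ar c) -> V) -> V) (S : (nat -> V) -> Prop) :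
  rich S -> const_expressive I S ->
  (forall R, (R = ss \/ R = tt \/ R = st \/ R = ts \/ R = ss_cap_tt) ->
     admits_G_disj I S R /\ admits_G_conj I S R) /\
  (forall R, (R = ss \/ R = tt \/ R = st \/ R = ts) ->
     admits_G_neg I S R /\ admits_G_cond I S R) /\
  ~ admits_G_neg I S ss_cap_tt /\ ~ admits_G_cond I S ss_cap_tt.
Proof.
move=> rich_S ce_S; split; [|split; [|split]].
- move=> R [->|[->|[->|[->|->]]]].
  + exact: mixed_admits_G_disj_conj upward_D1 upward_D1.
  + exact: mixed_admits_G_disj_conj upward_D1h upward_D1h.
  + exact: mixed_admits_G_disj_conj upward_D1 upward_D1h.
  + exact: mixed_admits_G_disj_conj upward_D1h upward_D1.
  + exact: ss_cap_tt_admits_G_disj_conj.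
- move=> R [->|[->|[->|->]]].
  + exact: mixed_admits_G_neg_cond upward_D1 upward_D1 neg_for_ss neg_for_ss.
  + exact: mixed_admits_G_neg_cond upward_D1h upward_D1h neg_for_tt neg_for_tt.
  + exact: mixed_admits_G_neg_cond upward_D1 upward_D1h neg_for_st neg_for_ts.
  + exact: mixed_admits_G_neg_cond upward_D1h upward_D1 neg_for_ts neg_for_st.
- exact: ss_cap_tt_not_admits_G_neg.
- exact: ss_cap_tt_not_admits_G_cond.
Qed.
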